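(* Let $M\in\mathbb{R}^{D\times D}$ be symmetric positive semidefinite, let $L_*$ be a $d$-dimensional subspace of $\mathbb{R}^D$ with $1\le d<D$, and let $x=\sigma_{D-d}(U_{L_*^\perp}^\top MU_{L_*^\perp})$, $y=\sigma_d(U_{L_*}^\top MU_{L_*})$, $z=\|U_{L_*}^\top MU_{L_*^\perp}\|$. Then $$\sigma_D(M)\ge\frac{(x+y)-\sqrt{(x-y)^2+4z^2}}{2}.$$ If moreover $z\le\sqrt{xy}/2$, then $\sigma_D(M)\ge\min(x,y)/3$.
   Context: $U_{L_*}\in\mathbb{R}^{D\times d}$ and $U_{L_*^\perp}\in\mathbb{R}^{D\times(D-d)}$ have orthonormal columns spanning $L_*$ and its orthogonal complement. $\sigma_i(\cdot)$ denotes the $i$-th largest eigenvalue of a symmetric matrix, and $\|\cdot\|$ is the spectral norm. *)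

From HB Require Import structures.
From mathcomp Require Import all_boot all_order all_algebra.
From mathcomp Require Import boolp classical_sets reals.
Set Implicit Arguments. Unset Strict Implicit. Unset Printing Implicit Defensive.
Import Order.TTheory GRing.Theory Num.Theory.
Local Open Scope ring_scope.
Local Open Scope classical_set_scope.

Definition symmetric_mx (R : realType) (n : nat) (A : 'M[R]_n) := A^T = A.

Definition psd_mx (R : realType) (n : nat) (A : 'M[R]_n) :=
  forall v : 'cV[R]_n, 0 <= (v^T *m A *m v) 0 0.

(* Smallest eigenvalue (sigma_n, n = size) of a square real matrix:
   the infimum of the set of its (real) eigenvalues. For real symmetric
   matrices this set is finite and nonempty, so this is the minimum. *)
Definition lambda_min (R : realType) (n : nat) (A : 'M[R]_n) : R :=
  inf [set a : R | eigenvalue A a].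

Definition norm2 (R : realType) (n : nat) (v : 'cV[R]_n) : R :=
  Num.sqrt (\sum_i (v i 0) ^+ 2).

Definition spec_norm (R : realType) (m n : nat) (A : 'M[R]_(m, n)) : R :=
  sup [set norm2 (A *m v) | v in [set v : 'cV[R]_n | norm2 v <= 1]].

From HB Require Import structures.
From mathcomp Require Import all_boot all_order all_algebra.
From mathcomp Require Import boolp classical_sets reals.
From mathcomp Require Import complex.
From mathcomp.algebra_tactics Require Import ring lra.
Set Implicit Arguments.
Unset Strict Implicit.
Unset Printing Implicit Defensive.
Import Order.TTheory GRing.Theory Num.Theory.
Local Open Scope ring_scope.

(* Let w be a unit eigenvector of M for its smallest eigenvalue lambda and
   split it as w = U a + V b along L_* and its orthogonal complement. Then
     lambda = a^T (U^T M U) a + 2 a^T (U^T M V) b + b^T (V^T M V) b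
            >= y |a|^2 + x |b|^2 - 2 z |a| |b|,
   a quadratic form in (|b|, |a|) with matrix [[x, -z], [-z, y]], hence at
   least its smaller eigenvalue, which is the first bound, times
   |a|^2 + |b|^2 = 1. The second bound is elementary: when 4 z^2 <= x y the
   square root is at most max(x, y) + min(x, y) / 3.
   The smallest eigenvalue of a real symmetric matrix, and the Rayleigh bound
   lambda_min |u|^2 <= u^T M u, come from the spectral theorem applied to the
   complexified, Hermitian, matrix. *)

Lemma submx_kermx_tr_orthogonal (F : fieldType) m p k n (A : 'M[F]_(m, n))
    (B : 'M[F]_(p, n)) (L : 'M[F]_(k, n)) :
  (A <= L)%MS -> (B <= kermx L^T)%MS -> A *m B^T = 0.
Proof.
move=> /submxP[X ->] /sub_kermxP BLt.
by rewrite -mulmxA -[L *m _]trmxK trmx_mul trmxK BLt trmx0 mulmx0.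
Qed.

Lemma orthonormal_blocks_resolution (R : comPzRingType) n p q
    (U : 'M[R]_(n, p)) (V : 'M[R]_(n, q)) :
  (p + q = n)%N -> U^T *m U = 1%:M -> V^T *m V = 1%:M -> U^T *m V = 0 ->
  U *m U^T + V *m V^T = 1%:M.
Proof.
move=> pqn; case: n / pqn in U V *; move=> UtU VtV UtV.
have VtU : V^T *m U = 0 by rewrite -[LHS]trmxK trmx_mul trmxK UtV trmx0.
have WtW : (row_mx U V)^T *m row_mx U V = 1%:M.
  by rewrite tr_row_mx mul_col_row UtU VtV UtV VtU -scalar_mx_block.
by have := mulmx1C WtW; rewrite tr_row_mx mul_row_col.
Qed.

Section HermitianRayleigh.
Local Open Scope sesquilinear_scope.
Variable C : numClosedFieldType.

Lemma diag_mx_form_ge_min n (sp : 'rV[C]_n) k (w : 'cV[C]_n) :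
  (forall i, sp 0 k <= sp 0 i) ->
  sp 0 k * (w^t* *m w) 0 0 <= (w^t* *m diag_mx sp *m w) 0 0.
Proof.
move=> spk_min; rewrite !mxE mulr_sumr; apply: ler_sum => j _.
rewrite mul_mx_diag !mxE [_ * sp 0 j]mulrC -!mulrA.
by rewrite ler_wpM2r // mulrC mul_conjC_ge0.
Qed.

Lemma hermitian_min_eigenvalue n (A : 'M[C]_n.+1) : A \is hermsymmx ->
  exists2 m, m \is Num.real & eigenvalue A m /\
    forall u : 'cV_n.+1, m * (u^t* *m u) 0 0 <= (u^t* *m A *m u) 0 0.
Proof.
move=> Aherm; have /orthomx_spectralP AE := hermitian_normalmx Aherm.
set P := spectralmx A in AE; set sp := spectral_diag A in AE.
have Punitary : P \is unitarymx := spectral_unitarymx A.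
have sp_real i : sp 0 i \is Num.real.
  exact: mxOverP (hermitian_spectral_diag_real Aherm) _ _.
pose k := [arg min_(i < ord0) sp 0 i]%O.
have spk_min : forall i, sp 0 k <= sp 0 i.
  rewrite /k; case: (@real_arg_minP _ _ ord0 predT (fun i => sp 0 i) isT).
    by move=> j _; apply: sp_real.
  by move=> j _ j_min i; apply: j_min.
exists (sp 0 k) => //; split.
  apply/eigenvalueP; exists (delta_mx 0 k *m P).
    rewrite {1}AE !mulmxA mulmxK ?unitarymx_unit // -[_ *m diag_mx sp]rowE.
    by rewrite row_diag_mx -scalemxAl.
  rewrite mulmx_free_eq0 ?row_free_unit ?unitarymx_unit //.
  by apply/eqP => /matrixP/(_ 0 k)/eqP; rewrite !mxE !eqxx oner_eq0.
move=> u; rewrite AE invmx_unitary // !mulmxA.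
have -> : u^t* *m u = (P *m u)^t* *m (P *m u).
  by rewrite trmx_mul map_mxM mulmxA mulmxKtV.
rewrite (_ : _ *m P *m u = (P *m u)^t* *m diag_mx sp *m (P *m u)).
  exact: diag_mx_form_ge_min.
by rewrite trmx_mul map_mxM !mulmxA.
Qed.

End HermitianRayleigh.

Section RealSymmetric.
Variable R : realType.
Local Notation "''[' u , v ']'" := ((u^T *m v) 0 0) : ring_scope.
Local Notation toC := (real_complex R).

Lemma symmetric_min_eigenvalue n (S : 'M[R]_n.+1) : symmetric_mx S ->
  exists2 m, eigenvalue S m & forall u : 'cV_n.+1, m * '[u, u] <= '[u, S *m u].
Proof.
move=> Ssym; set SC := map_mx toC S.
have map_real_mx m' n' (A : 'M[R]_(m', n')) : map_mx toC A \is a realmx.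
  by apply/mxOverP => i j; rewrite mxE complex_real.
have SCherm : SC \is hermsymmx.
  apply: realsym_hermsym (map_real_mx _ _ S).
  by rewrite is_hermitianmxE expr0 scale1r map_mx_id // /SC map_trmx Ssym.
have [m m_real [m_eig m_min]] := hermitian_min_eigenvalue SCherm.
have mE : toC (complex.Re m) = m by rewrite RRe_real.
have toC_dot (v w : 'cV[R]_n.+1) :
    toC '[v, w] = ((map_mx toC v)^t* *m map_mx toC w)%sesqui 0 0.
  by rewrite -map_trmx realmxC ?map_real_mx // map_trmx -map_mxM [RHS]mxE.
exists (complex.Re m).
  move: m_eig; rewrite -mE !eigenvalue_root_char -map_char_poly.
  by rewrite fmorph_root.
move=> u; rewrite -lecR rmorphM /= mE !toC_dot map_mxM mulmxA.
exact: m_min.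
Qed.

Lemma dotC n (u v : 'cV[R]_n) : '[u, v] = '[v, u].
Proof. by rewrite !mxE; apply: eq_bigr => i _; rewrite !mxE mulrC. Qed.

Lemma dotDr n (u v w : 'cV[R]_n) : '[u, v + w] = '[u, v] + '[u, w].
Proof. by rewrite mulmxDr mxE. Qed.

Lemma dotDl n (u v w : 'cV[R]_n) : '[u + v, w] = '[u, w] + '[v, w].
Proof. by rewrite [LHS]dotC dotDr !(dotC w). Qed.

Lemma dotNr n (u v : 'cV[R]_n) : '[u, - v] = - '[u, v].
Proof. by rewrite mulmxN mxE. Qed.

Lemma dotZr n a (u v : 'cV[R]_n) : '[u, a *: v] = a * '[u, v].
Proof. by rewrite -scalemxAr mxE. Qed.

Lemma dotZl n a (u v : 'cV[R]_n) : '[a *: u, v] = a * '[u, v].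
Proof. by rewrite [LHS]dotC dotZr dotC. Qed.

Lemma dot_mulmxl m n (A : 'M[R]_(m, n)) (u : 'cV_n) (v : 'cV_m) :
  '[A *m u, v] = '[u, A^T *m v].
Proof. by rewrite trmx_mul mulmxA. Qed.

Lemma dot_mulmxr m n (A : 'M[R]_(m, n)) (u : 'cV_m) (v : 'cV_n) :
  '[u, A *m v] = '[A^T *m u, v].
Proof. by rewrite trmx_mul trmxK mulmxA. Qed.

Lemma dot_ge0 n (u : 'cV[R]_n) : 0 <= '[u, u].
Proof. by rewrite mxE; apply: sumr_ge0 => i _; rewrite mxE -expr2 sqr_ge0. Qed.

Lemma dot_eq0 n (u : 'cV[R]_n) : ('[u, u] == 0) = (u == 0).
Proof.
apply/idP/eqP => [|->]; last by rewrite mulmx0 mxE.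
rewrite mxE psumr_eq0 => [/allP u0|i _]; last by rewrite mxE -expr2 sqr_ge0.
apply/matrixP => i j; rewrite ord1 mxE.
by move: (u0 i (mem_index_enum i)); rewrite mxE -expr2 sqrf_eq0 => /eqP.
Qed.

Lemma dot_gt0 n (u : 'cV[R]_n) : (0 < '[u, u]) = (u != 0).
Proof. by rewrite lt_def dot_eq0 dot_ge0 andbT. Qed.

Lemma symmetric_col_eigenvector n (S : 'M[R]_n) a : symmetric_mx S ->
  eigenvalue S a -> exists2 u : 'cV_n, u != 0 & S *m u = a *: u.
Proof.
move=> Ssym /eigenvalueP[v vS v_neq0]; exists v^T; first by rewrite trmx_eq0.
by rewrite -{1}Ssym -trmx_mul vS linearZ.
Qed.

Lemma rayleigh_lb_le_eigenvalue n (S : 'M[R]_n) c a : symmetric_mx S ->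
  (forall u : 'cV_n, c * '[u, u] <= '[u, S *m u]) -> eigenvalue S a -> c <= a.
Proof.
move=> Ssym c_lb /(symmetric_col_eigenvector Ssym)[u u_neq0 Su].
by have := c_lb u; rewrite Su dotZr ler_pM2r ?dot_gt0.
Qed.

Lemma lambda_minP n (S : 'M[R]_n) : (0 < n)%N -> symmetric_mx S ->
  eigenvalue S (lambda_min S) /\
  forall u : 'cV_n, lambda_min S * '[u, u] <= '[u, S *m u].
Proof.
case: n S => // n S _ Ssym.
have [m m_eig m_lb] := symmetric_min_eigenvalue Ssym.
suff -> : lambda_min S = m by [].
have m_lbound : lbound [set a | eigenvalue S a] m.
  by move=> a; apply: rayleigh_lb_le_eigenvalue.
apply/le_anti/andP; split; first by apply: ge_inf m_eig; exists m.
by apply: lb_le_inf m_lbound; exists m.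
Qed.

Lemma rayleigh_lb_le_lambda_min n (S : 'M[R]_n) c : (0 < n)%N ->
  symmetric_mx S -> (forall u : 'cV_n, c * '[u, u] <= '[u, S *m u]) ->
  c <= lambda_min S.
Proof.
move=> n_gt0 Ssym c_lb.
exact: rayleigh_lb_le_eigenvalue c_lb (lambda_minP n_gt0 Ssym).1.
Qed.

Lemma psd_lambda_min_ge0 n (S : 'M[R]_n) : (0 < n)%N ->
  symmetric_mx S -> psd_mx S -> 0 <= lambda_min S.
Proof.
move=> n_gt0 Ssym Spsd; apply: rayleigh_lb_le_lambda_min => // u.
by rewrite mul0r mulmxA.
Qed.

Lemma symmetric_mx_compress n p (M : 'M[R]_n) (Q : 'M[R]_(n, p)) :
  symmetric_mx M -> symmetric_mx (Q^T *m M *m Q).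
Proof. by move=> Msym; rewrite /symmetric_mx !trmx_mul trmxK Msym mulmxA. Qed.

Lemma psd_mx_compress n p (M : 'M[R]_n) (Q : 'M[R]_(n, p)) :
  psd_mx M -> psd_mx (Q^T *m M *m Q).
Proof. by move=> Mpsd v; have := Mpsd (Q *m v); rewrite trmx_mul !mulmxA. Qed.

Lemma norm2E n (u : 'cV[R]_n) : norm2 u = Num.sqrt '[u, u].
Proof.
by rewrite /norm2 mxE; congr Num.sqrt; apply: eq_bigr => i _; rewrite mxE.
Qed.

Lemma norm2_0 n : norm2 (0 : 'cV[R]_n) = 0.
Proof. by rewrite norm2E mulmx0 mxE sqrtr0. Qed.

Lemma norm2_ge0 n (u : 'cV[R]_n) : 0 <= norm2 u.
Proof. by rewrite norm2E sqrtr_ge0. Qed.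

Lemma sqr_norm2 n (u : 'cV[R]_n) : norm2 u ^+ 2 = '[u, u].
Proof. by rewrite norm2E sqr_sqrtr ?dot_ge0. Qed.

Lemma norm2_eq0 n (u : 'cV[R]_n) : (norm2 u == 0) = (u == 0).
Proof. by rewrite norm2E sqrtr_eq0 -dot_eq0 eq_le dot_ge0 andbT. Qed.

Lemma norm2Z n a (u : 'cV[R]_n) : norm2 (a *: u) = `|a| * norm2 u.
Proof.
by rewrite !norm2E dotZl dotZr mulrA -expr2 sqrtrM ?sqr_ge0 // sqrtr_sqr.
Qed.

Lemma dot_le_norm2 n (u v : 'cV[R]_n) : `|'[u, v]| <= norm2 u * norm2 v.
Proof.
have [->|u_neq0] := eqVneq u 0.
  by rewrite trmx0 mul0mx mxE normr0 mulr_ge0 ?norm2_ge0.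
rewrite !norm2E -sqrtrM ?dot_ge0 // -sqrtr_sqr ler_sqrt ?mulr_ge0 ?dot_ge0 //.
have := dot_ge0 ('[u, u] *: v + (- '[u, v]) *: u).
have := dot_gt0 u; rewrite u_neq0.
rewrite !(dotDl, dotDr, dotZl, dotZr) (dotC v u).
set s := '[u, u]; set t := '[u, v]; set r := '[v, v]; nra.
Qed.

Lemma spec_norm_has_sup m n (B : 'M[R]_(m, n)) : (0 < n)%N ->
  has_sup [set norm2 (B *m v) | v in [set v | norm2 v <= 1]].
Proof.
move=> n_gt0; split; first by exists 0, 0; rewrite /= ?mulmx0 norm2_0.
(* |B v|^2 = - v^T (- B^T B) v is bounded by the smallest eigenvalue of
   - B^T B. *)
have BtB_sym : symmetric_mx (- (B^T *m B)).
  by rewrite /symmetric_mx linearN /= trmx_mul trmxK.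
have [_ mu_lb] := lambda_minP n_gt0 BtB_sym; set mu := lambda_min _ in mu_lb.
exists (Num.sqrt `|mu|) => _ [v /= v_le1 <-]; rewrite norm2E ler_wsqrtr //.
have vv_le1 : '[v, v] <= 1 by rewrite -sqr_norm2 exprn_ile1 ?norm2_ge0.
have := mu_lb v; rewrite mulNmx dotNr -mulmxA dot_mulmxr trmxK.
have := dot_ge0 v; have : - mu <= `|mu| by rewrite -normrN ler_norm.
have := normr_ge0 mu; nra.
Qed.

Lemma spec_norm_ge0 m n (B : 'M[R]_(m, n)) : (0 < n)%N -> 0 <= spec_norm B.
Proof.
move=> n_gt0; apply: le_trans (sup_upper_bound (spec_norm_has_sup B n_gt0) _).
  exact: norm2_ge0 (B *m 0).
by exists 0; rewrite /= ?norm2_0.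
Qed.

Lemma norm2_mulmx_le m n (B : 'M[R]_(m, n)) v : (0 < n)%N ->
  norm2 (B *m v) <= spec_norm B * norm2 v.
Proof.
move=> n_gt0; have [->|v_neq0] := eqVneq v 0.
  by rewrite mulmx0 !norm2_0 mulr0.
have v_gt0 : 0 < norm2 v by rewrite lt_def norm2_eq0 v_neq0 norm2_ge0.
rewrite -ler_pdivrMr // mulrC -[X in X * _]ger0_norm ?invr_ge0 ?norm2_ge0 //.
rewrite -norm2Z scalemxAr; apply: (sup_upper_bound (spec_norm_has_sup B n_gt0)).
exists ((norm2 v)^-1 *: v) => //=.
by rewrite norm2Z ger0_norm ?invr_ge0 ?norm2_ge0 // mulVf ?gt_eqF.
Qed.

(* The smaller eigenvalue of [[x, z], [z, y]]. *)
Definition min_eig2 (x y z : R) :=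
  ((x + y) - Num.sqrt ((x - y) ^+ 2 + 4 * z ^+ 2)) / 2.

Lemma min_eig2_le_quad x y z s t :
  min_eig2 x y z * (s ^+ 2 + t ^+ 2) <= x * s ^+ 2 + y * t ^+ 2 - 2 * z * s * t.
Proof.
rewrite /min_eig2; set r := Num.sqrt _; have r_ge0 : 0 <= r := sqrtr_ge0 _.
have r2 : r ^+ 2 = (x - y) ^+ 2 + 4 * z ^+ 2.
  by rewrite /r sqr_sqrtr // addr_ge0 ?sqr_ge0 // mulr_ge0 // sqr_ge0.
(* P and Q are x and y minus min_eig2 x y z; P + Q = r and P * Q = z ^+ 2
   make (P + Q) times the quadratic form a sum of squares. *)
pose P := (x - y + r) / 2; pose Q := (y - x + r) / 2.
have PQ : P * Q = z ^+ 2 by rewrite /P /Q; nra.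
have z2_ge0 := sqr_ge0 z; have P_ge0 : 0 <= P by rewrite /P; nra.
have Q_ge0 : 0 <= Q by rewrite /Q; nra.
suff form_ge0 : 0 <= P * s ^+ 2 + Q * t ^+ 2 - 2 * z * s * t.
  by rewrite /P /Q in form_ge0; lra.
have [r0|r_gt0] := eqVneq r 0.
  have P0 : P = 0 by move: P_ge0 Q_ge0; rewrite /P /Q r0; lra.
  have /eqP z0 : z == 0 by rewrite -sqrf_eq0 -PQ P0 mul0r.
  by rewrite P0 z0; nra.
have sos : r * (P * s ^+ 2 + Q * t ^+ 2 - 2 * z * s * t) =
    (P * s - z * t) ^+ 2 + (Q * t - z * s) ^+ 2
    + (P * Q - z ^+ 2) * (s ^+ 2 + t ^+ 2).
  by rewrite /P /Q; field.
rewrite PQ subrr mul0r addr0 in sos.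
have := sqr_ge0 (P * s - z * t); have := sqr_ge0 (Q * t - z * s).
have : 0 < r by rewrite lt_def r_gt0.
nra.
Qed.

Lemma min_eig2_ge_min x y z : 0 <= x -> 0 <= y -> 0 <= z ->
  z <= Num.sqrt (x * y) / 2 -> Num.min x y / 3 <= min_eig2 x y z.
Proof.
move=> x_ge0 y_ge0 z_ge0 z_le; rewrite /min_eig2.
have z2_le : 4 * z ^+ 2 <= x * y.
  have := sqr_sqrtr (mulr_ge0 x_ge0 y_ge0); have := sqrtr_ge0 (x * y).
  set s := Num.sqrt _ in z_le *; nra.
have sqrt_le e u : 0 <= u -> e <= u ^+ 2 -> Num.sqrt e <= u.
  by move=> u_ge0 /ler_wsqrtr; rewrite sqrtr_sqr ger0_norm.
have [xy|/ltW yx] := leP x y.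
  have : Num.min x y <= x by rewrite ge_min lexx.
  have : Num.sqrt ((x - y) ^+ 2 + 4 * z ^+ 2) <= y + x / 3.
    by apply: sqrt_le; nra.
  lra.
have : Num.min x y <= y by rewrite ge_min lexx orbT.
have : Num.sqrt ((x - y) ^+ 2 + 4 * z ^+ 2) <= x + y / 3.
  by apply: sqrt_le; nra.
lra.
Qed.

Lemma min_eig2_rayleigh n p q (M : 'M[R]_n) (U : 'M_(n, p)) (V : 'M_(n, q)) :
  (0 < p)%N -> (0 < q)%N -> symmetric_mx M -> U *m U^T + V *m V^T = 1%:M ->
  let x := lambda_min (V^T *m M *m V) in
  let y := lambda_min (U^T *m M *m U) in
  let z := spec_norm (U^T *m M *m V) in
  forall u : 'cV_n, min_eig2 x y z * '[u, u] <= '[u, M *m u].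
Proof.
move=> p_gt0 q_gt0 Msym UV1 x y z u.
pose a := U^T *m u; pose b := V^T *m u.
have u_split : u = U *m a + V *m b by rewrite !mulmxA -mulmxDl UV1 mul1mx.
have uu : '[u, u] = '[a, a] + '[b, b] by rewrite {2}u_split dotDr !dot_mulmxr.
have cross : '[V *m b, M *m (U *m a)] = '[U *m a, M *m (V *m b)].
  by rewrite dot_mulmxr Msym dotC.
have uMu : '[u, M *m u] = '[a, U^T *m M *m U *m a]
    + 2 * '[a, U^T *m M *m V *m b] + '[b, V^T *m M *m V *m b].
  rewrite u_split mulmxDr !(dotDl, dotDr) cross !dot_mulmxl !mulmxA; ring.
have a_lb := (lambda_minP p_gt0 (symmetric_mx_compress U Msym)).2 a.
have b_lb := (lambda_minP q_gt0 (symmetric_mx_compress V Msym)).2 b.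
have ab_lb : - (norm2 a * (z * norm2 b)) <= '[a, U^T *m M *m V *m b].
  have ab_le : `|'[a, U^T *m M *m V *m b]| <= norm2 a * (z * norm2 b).
    apply: le_trans (dot_le_norm2 _ _) _.
    by rewrite ler_wpM2l ?norm2_ge0 ?norm2_mulmx_le.
  by move: ab_le; rewrite ler_norml => /andP[].
have := min_eig2_le_quad x y z (norm2 b) (norm2 a); rewrite !sqr_norm2.
rewrite uu uMu; lra.
Qed.

End RealSymmetric.

Theorem lemma2 (R : realType) (D d : nat) (M : 'M[R]_D) (L : 'M[R]_D)
    (U : 'M[R]_(D, d)) (V : 'M[R]_(D, D - d)) :
  (1 <= d)%N -> (d < D)%N ->
  symmetric_mx M -> psd_mx M ->
  \rank L = d ->
  (U^T == L)%MS -> U^T *m U = 1%:M ->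
  (V^T == kermx L^T)%MS -> V^T *m V = 1%:M ->
  let x := lambda_min (V^T *m M *m V) in
  let y := lambda_min (U^T *m M *m U) in
  let z := spec_norm (U^T *m M *m V) in
  ((x + y) - Num.sqrt ((x - y) ^+ 2 + 4 * z ^+ 2)) / 2 <= lambda_min M /\
  (z <= Num.sqrt (x * y) / 2 -> Num.min x y / 3 <= lambda_min M).
Proof.
(* The rank hypothesis follows from the others. *)
move=> d_gt0 d_lt_D Msym Mpsd _ /andP[UL _] UtU /andP[VL _] VtV x y z.
have Dd_gt0 : (0 < D - d)%N by rewrite subn_gt0.
have UtV : U^T *m V = 0 by rewrite -[V]trmxK (submx_kermx_tr_orthogonal UL VL).
have UV1 := orthonormal_blocks_resolution (subnKC (ltnW d_lt_D)) UtU VtV UtV.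
have lower : min_eig2 x y z <= lambda_min M.
  apply: rayleigh_lb_le_lambda_min => //; last exact: min_eig2_rayleigh.
  exact: leq_trans d_lt_D.
split; first exact: lower.
move=> z_le; apply: le_trans lower; apply: min_eig2_ge_min z_le.
- apply: psd_lambda_min_ge0 Dd_gt0 _ (psd_mx_compress V Mpsd).
  exact: symmetric_mx_compress.
- apply: psd_lambda_min_ge0 d_gt0 _ (psd_mx_compress U Mpsd).
  exact: symmetric_mx_compress.
- exact: spec_norm_ge0.
Qed.
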